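(* Let $E_1,\dots,E_m$ be mutually independent events on a probability space, and for $\mathcal S\subseteq[m]$ let $U(\mathcal S)=\mathbf P\big(\bigcup_{i\in\mathcal S}E_i\big)$. Let $1\le k\le m$ and let $\mathcal S_G=\{f_1,\dots,f_k\}$ be a greedy solution, defined by $\mathcal S_G^0=\emptyset$, $\mathcal S_G^i=\mathcal S_G^{i-1}\cup\{f_i\}$, where $$f_i\in\arg\max_{f\in[m]\setminus\mathcal S_G^{i-1}}\Big(U(\mathcal S_G^{i-1}\cup\{f\})-U(\mathcal S_G^{i-1})\Big),\quad 1\le i\le k,$$ and $\mathcal S_G=\mathcal S_G^k$. Then $\mathcal S_G$ maximizes $U(\mathcal S)$ over all $\mathcal S\subseteq[m]$ with $|\mathcal S|=k$, i.e. $\mathcal S_G$ equals an optimal $k$-element solution. *)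

From HB Require Import structures.
From mathcomp Require Import all_boot all_order all_algebra.
From mathcomp Require Import all_classical all_reals all_analysis.
Set Implicit Arguments. Unset Strict Implicit. Unset Printing Implicit Defensive.
Import Order.TTheory GRing.Theory Num.Theory.
Local Open Scope classical_set_scope.
Local Open Scope ereal_scope.

Definition union_of {T : Type} {m : nat} (E : 'I_m -> set T) (S : {set 'I_m}) : set T :=
  \big[setU/set0]_(i in S) E i.

Definition inter_of {T : Type} {m : nat} (E : 'I_m -> set T) (J : {set 'I_m}) : set T :=
  \big[setI/setT]_(i in J) E i.

Definition mutually_independent {d : measure_display} {T : measurableType d}
  {R : realType} (P : probability T R) {m : nat} (E : 'I_m -> set T) : Prop :=
  (forall i, measurable (E i)) /\
  forall J : {set 'I_m}, P (inter_of E J) = \big[*%E/1%E]_(i in J) P (E i).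

Definition U {d : measure_display} {T : measurableType d} {R : realType}
  (P : probability T R) {m : nat} (E : 'I_m -> set T) (S : {set 'I_m}) : \bar R :=
  P (union_of E S).

(* S_G^i = {f_1, ..., f_i} (0-based: f indices j < i). *)
Definition greedy_prefix {m k : nat} (f : 'I_k -> 'I_m) (i : nat) : {set 'I_m} :=
  [set x | [exists j : 'I_k, (j < i)%N && (f j == x)]].

Definition is_greedy {d : measure_display} {T : measurableType d} {R : realType}
  (P : probability T R) {m k : nat} (E : 'I_m -> set T) (f : 'I_k -> 'I_m) : Prop :=
  forall i : 'I_k,
    f i \notin greedy_prefix f i /\
    forall g : 'I_m, g \notin greedy_prefix f i ->
      U P E (g |: greedy_prefix f i) - U P E (greedy_prefix f i) <=
      U P E (f i |: greedy_prefix f i) - U P E (greedy_prefix f i).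

From HB Require Import structures.
From mathcomp Require Import all_boot all_order all_algebra.
From mathcomp Require Import all_classical all_reals all_analysis.
From mathcomp Require Import ring.
Import Order.TTheory GRing.Theory Num.Theory.
Local Open Scope classical_set_scope.
Local Open Scope ring_scope.

(* By independence, U(S) = 1 - prod_(i in S) (1 - p_i) with p_i = P(E_i), so
   adding g to a set A gains p_g * prod_(i in A) (1 - p_i).  If the greedy set G
   has U(G) = 1 it is trivially optimal; otherwise every prefix product is
   positive, so the greedy rule picks at each step an index of maximal p_i,
   and an exchange argument on S :\: G and G :\: S shows that G minimises
   prod_(i in S) (1 - p_i) among sets of size k. *)

Lemma ler_prod_card (R : realDomainType) (I : finType) (A B : {set I})
    (x : I -> R) :
  #|A| = #|B| -> (forall a, a \in A -> 0 <= x a) ->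
  (forall a b, a \in A -> b \in B -> x a <= x b) ->
  \prod_(a in A) x a <= \prod_(b in B) x b.
Proof.
move=> AB x_ge0 xAB.
have [A0|[a0 Aa0]] := set_0Vmem A.
  move: AB; rewrite A0 cards0 => /esym/eqP; rewrite cards_eq0 => /eqP ->.
  by rewrite !big_set0.
have [a Aa a_max] := @arg_maxP _ R _ a0 (fun i => i \in A) x Aa0.
apply: (@le_trans _ _ (\prod_(i in A) x a)).
  by apply: ler_prod => i Ai; rewrite x_ge0 //=; apply: a_max.
apply: (@le_trans _ _ (\prod_(i in B) x a)); first by rewrite !prodr_const AB.
by apply: ler_prod => i Bi; rewrite x_ge0 //= xAB.
Qed.

Lemma ler_prod_smallest (R : realDomainType) (I : finType) (G S : {set I})
    (x : I -> R) :
  (forall i, 0 <= x i) -> #|S| = #|G| ->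
  (forall a b, a \in G -> b \notin G -> x a <= x b) ->
  \prod_(i in G) x i <= \prod_(i in S) x i.
Proof.
move=> x_ge0 SG x_small.
rewrite (big_setID S) /= (big_setID (A := S) G) /= finset.setIC.
apply: ler_wpM2l; first exact: prodr_ge0.
apply: ler_prod_card => [||a b].
- apply/eqP; rewrite -(eqn_add2l #|G :&: S|) cardsID finset.setIC cardsID.
  by rewrite SG.
- by move=> a _; exact: x_ge0.
- by rewrite !inE => /andP[_ aG] /andP[bG _]; exact: x_small.
Qed.

Section GreedyPrefix.
Context {m k : nat} (f : 'I_k -> 'I_m).

Lemma mem_greedy_prefix (i j : 'I_k) : (j < i)%N -> f j \in greedy_prefix f i.
Proof. by move=> ji; rewrite inE; apply/existsP; exists j; rewrite ji eqxx. Qed.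

Lemma greedy_prefix_sub (i : nat) : greedy_prefix f i \subset greedy_prefix f k.
Proof.
apply/fintype.subsetP => x; rewrite !inE => /existsP[j /andP[_ fj]].
by apply/existsP; exists j; rewrite fj ltn_ord.
Qed.

Lemma greedy_prefixP (x : 'I_m) :
  reflect (exists j, x = f j) (x \in greedy_prefix f k).
Proof.
rewrite inE; apply: (iffP existsP) => [[j /andP[_ /eqP <-]]|[j ->]].
  by exists j.
by exists j; rewrite ltn_ord eqxx.
Qed.

Hypothesis f_fresh : forall i : 'I_k, f i \notin greedy_prefix f i.

Lemma greedy_prefix_inj : injective f.
Proof.
move=> i j fij; apply/val_inj/eqP.
case: ltngtP => // [ij|ji].
- by have := f_fresh j; rewrite -fij mem_greedy_prefix.
- by have := f_fresh i; rewrite fij mem_greedy_prefix.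
Qed.

Lemma card_greedy_prefix : #|greedy_prefix f k| = k.
Proof.
have -> : greedy_prefix f k = f @: [set: 'I_k]%SET.
  apply/finset.setP => x; apply/greedy_prefixP/imsetP => -[j].
    by exists j; rewrite ?inE.
  by exists j.
by rewrite card_imset ?finset.cardsT ?card_ord //; exact: greedy_prefix_inj.
Qed.

End GreedyPrefix.

Lemma disjointsU1 (I : finType) (x : I) (A B : {set I}) :
  [disjoint x |: A & B]%B = (x \notin B) && [disjoint A & B]%B.
Proof. by rewrite -setI_eq0 finset.setIUl finset.setU_eq0 !setI_eq0 disjoints1. Qed.

Lemma measurable_inter_of d (T : measurableType d) m (F : 'I_m -> set T) J :
  (forall i, measurable (F i)) -> measurable (inter_of F J).
Proof. by move=> mF; rewrite /inter_of; elim/big_ind: _ => //; exact: measurableI. Qed.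

Lemma setC_union_of T m (F : 'I_m -> set T) K :
  ~` union_of F K = inter_of (fun i => ~` F i) K.
Proof.
rewrite /union_of /inter_of.
by elim/big_rec2: _ => [|i A B _ <-]; rewrite ?setC0 ?setCU.
Qed.

Section IndependentEvents.
Context {d : measure_display} {T : measurableType d} {R : realType}.
Context {P : probability T R} {m : nat} {E : 'I_m -> set T}.
Hypothesis E_indep : mutually_independent P E.

Local Notation p i := (fine (P (E i))).

Let mE : forall i, measurable (E i). Proof. exact: E_indep.1. Qed.

Let probabilityE A : measurable A -> P A = (fine (P A))%:E.
Proof. by move=> mA; rewrite fineK ?fin_num_measure. Qed.

Lemma fine_probability_le1 i : p i <= 1.
Proof. by rewrite -lee_fin -probabilityE // probability_le1. Qed.

Lemma probability_inter_of J : P (inter_of E J) = (\prod_(i in J) p i)%:E.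
Proof.
rewrite E_indep.2; elim/big_rec2: _ => [//|i x y _ ->].
by rewrite {1}probabilityE // EFinM.
Qed.

Lemma probability_inter_of_compl (J K : {set 'I_m}) : [disjoint J & K]%B ->
  P (inter_of E J `&` inter_of (fun i => ~` E i) K) =
  ((\prod_(i in J) p i) * \prod_(i in K) (1 - p i))%:E.
Proof.
move: {2}#|K| (erefl #|K|) => n; elim: n K J => [|n IHn] K J.
  move/eqP; rewrite cards_eq0 => /eqP -> _.
  by rewrite /inter_of !big_set0 setIT mulr1 probability_inter_of.
move=> cardK JK.
have [k Kk] : exists k, k \in K by apply/set0Pn; rewrite -card_gt0 cardK.
have cardK' : #|K :\ k| = n by move: cardK; rewrite (cardsD1 k) Kk => -[].
move: JK; rewrite -(finset.setD1K Kk); set K' := K :\ k.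
have K'k : k \notin K' by rewrite setD11.
rewrite disjoint_sym disjointsU1 disjoint_sym => /andP[kJ JK'].
have kJK' : [disjoint k |: J & K']%B by rewrite disjointsU1 K'k.
(* P (A `\` E k) = P A - P (A `&` E k), and both terms on the right are covered
   by the induction hypothesis, the second one with k moved from K to J. *)
set A := inter_of E J `&` inter_of (fun i => ~` E i) K'.
have mA : measurable A.
  by apply: measurableI; apply: measurable_inter_of => // i; apply: measurableC.
have -> : inter_of E J `&` inter_of (fun i => ~` E i) (k |: K') = A `\` E k.
  by rewrite /inter_of big_setU1 //= setDE -setIA (setIC (~` E k)).
have AEk : A `&` E k = inter_of E (k |: J) `&` inter_of (fun i => ~` E i) K'.
  by rewrite /inter_of big_setU1 //= setIC setIA.
have : (P A = P (A `\` E k) + P (A `&` E k))%E by exact: measureDI.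
rewrite AEk {1}/A !IHn // probabilityE; last exact: measurableD.
rewrite -EFinD => -[]; rewrite !big_setU1 //= => Adecomp.
congr EFin; set a := \prod_(i in J) _ in Adecomp *.
set b := \prod_(i in K') _ in Adecomp *.
have -> : fine (P (A `\` E k)) = a * b - p k * a * b by rewrite Adecomp addrK.
by ring.
Qed.

Lemma U_indep S : U P E S = (1 - \prod_(i in S) (1 - p i))%:E.
Proof.
rewrite /U -(setCK (union_of E S)) setC_union_of probability_setC; last first.
  by apply: measurable_inter_of => i; apply: measurableC.
have := probability_inter_of_compl _ _ (eq_disjoint0 S (@finset.in_set0 'I_m)).
by rewrite /inter_of big_set0 setTI big_set0 mul1r => ->; rewrite EFinB.
Qed.

Lemma U_setU1_gain (g : 'I_m) (A : {set 'I_m}) : g \notin A ->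
  (U P E (g |: A) - U P E A = (p g * \prod_(i in A) (1 - p i))%:E)%E.
Proof.
move=> gA; rewrite !U_indep big_setU1 //= -EFinB; congr EFin.
by ring.
Qed.

Lemma greedy_prefix_maximal {k : nat} (f : 'I_k -> 'I_m) : is_greedy P E f ->
  \prod_(i in greedy_prefix f k) (1 - p i) != 0 ->
  forall a b, a \in greedy_prefix f k -> b \notin greedy_prefix f k ->
  1 - p a <= 1 - p b.
Proof.
move=> f_greedy /prodf_neq0 G_neq0 _ b /greedy_prefixP[j ->] bG.
have bGj : b \notin greedy_prefix f j.
  by apply: contra bG; apply/fintype.subsetP; exact: greedy_prefix_sub.
have Gj_gt0 : 0 < \prod_(i in greedy_prefix f j) (1 - p i).
  apply: prodr_gt0 => i Gji; rewrite lt_def subr_ge0 fine_probability_le1.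
  by rewrite G_neq0 //; move/fintype.subsetP: (greedy_prefix_sub f j); apply.
have [fj_fresh /(_ b bGj)] := f_greedy j.
by rewrite !U_setU1_gain // lee_fin ler_pM2r // lerD2l lerN2.
Qed.

End IndependentEvents.

Local Open Scope ereal_scope.

Theorem lemma2 (d : measure_display) (T : measurableType d) (R : realType)
  (P : probability T R) (m k : nat) (E : 'I_m -> set T)
  (hk1 : (1 <= k)%N) (hkm : (k <= m)%N)
  (hind : mutually_independent P E)
  (f : 'I_k -> 'I_m) (hgreedy : is_greedy P E f) :
  #|greedy_prefix f k| = k /\
  forall S : {set 'I_m}, #|S| = k -> U P E S <= U P E (greedy_prefix f k).
Proof.
have cardG := card_greedy_prefix f (fun i => (hgreedy i).1).
split=> // S cardS; rewrite !U_indep // lee_fin lerD2l lerN2.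
have factor_ge0 i : (0 <= 1 - fine (P (E i)))%R.
  by rewrite subr_ge0 fine_probability_le1.
set G := greedy_prefix f k in cardG *.
have [->|G_neq0] := eqVneq (\prod_(i in G) (1 - fine (P (E i))))%R 0%R.
  exact: prodr_ge0.
apply: ler_prod_smallest; [exact: factor_ge0 | by rewrite cardS cardG |].
exact: (greedy_prefix_maximal hind f hgreedy G_neq0).
Qed.
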